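(* For every $x\in\mathbb{R}=\mathfrak{C}(\mathbb{Q})$, $\mathrm{compress}(x)\asymp x$, where $\mathrm{compress}(x)=\lambda\varepsilon.\,\mathrm{approx}(x(\tfrac{\varepsilon}{2}),\tfrac{\varepsilon}{2})$.
   Context: $\mathbb{Q}^+$ denotes the strictly positive rationals. $\mathbb{Q}$ is a metric space with $B_\varepsilon(a,b)$ iff $|a-b|\le\varepsilon$ and equivalence being equality. $\mathbb{R}=\mathfrak{C}(\mathbb{Q})$ is the set of regular functions $x:\mathbb{Q}^+\to\mathbb{Q}$, i.e. $|x(\varepsilon_1)-x(\varepsilon_2)|\le\varepsilon_1+\varepsilon_2$ for all $\varepsilon_1,\varepsilon_2\in\mathbb{Q}^+$, with $x\asymp y$ iff $|x(\varepsilon)-y(\varepsilon)|\le 2\varepsilon$ for all $\varepsilon\in\mathbb{Q}^+$. For rationals in lowest terms, $\frac{n_1}{d_1}$ is simpler than $\frac{n_2}{d_2}$ if $|n_1|+|d_1|<|n_2|+|d_2|$; every closed rational interval contains a unique simplest rational. For $a\in\mathbb{Q}$, $\varepsilon\in\mathbb{Q}^+$, $\mathrm{approx}(a,\varepsilon)$ is the simplest rational number in $[a-\varepsilon,a+\varepsilon]$. *)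

From HB Require Import structures.
From mathcomp Require Import all_boot all_order all_algebra.
From mathcomp Require Import boolp classical_sets.
Set Implicit Arguments. Unset Strict Implicit. Unset Printing Implicit Defensive.
Import Order.TTheory GRing.Theory Num.Theory.
Local Open Scope ring_scope.

(* Complexity of a rational n/d in lowest terms: |n| + |d|
   (mathcomp's numq/denq give the reduced form, denq > 0). *)
Definition rat_size (q : rat) : int := `|numq q| + `|denq q|.

Definition simplest_in (lo hi q : rat) : Prop :=
  lo <= q <= hi /\
  forall r : rat, lo <= r <= hi -> r <> q -> rat_size q < rat_size r.

Definition approx (a e : rat) : rat :=
  xget a [set q | simplest_in (a - e) (a + e) q].

(* Regular functions Q+ -> Q (represented as functions on rat, only
   their values at positive arguments matter). *)
Definition regular (x : rat -> rat) : Prop :=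
  forall e1 e2 : rat, 0 < e1 -> 0 < e2 -> `|x e1 - x e2| <= e1 + e2.

Definition asymp (x y : rat -> rat) : Prop :=
  forall e : rat, 0 < e -> `|x e - y e| <= 2 * e.

Definition compress (x : rat -> rat) : rat -> rat :=
  fun e => approx (x (e / 2)) (e / 2).

From HB Require Import structures.
From mathcomp Require Import all_boot all_order all_algebra.
From mathcomp Require Import boolp classical_sets.
From mathcomp Require Import lra.
Import Order.TTheory GRing.Theory Num.Theory.
Local Open Scope ring_scope.

(* No existence of a simplest rational is needed: if [xget] found none it
   returns its default [a], which is trivially within [e] of [a]. *)
Lemma approx_dist (a e : rat) : 0 <= e -> `|approx a e - a| <= e.
Proof.
move=> e_ge0; rewrite /approx.
case: (pselect (exists q, simplest_in (a - e) (a + e) q)) => [ex_q | no_q].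
  have [/andP [lo_q q_hi] _] := xgetPex a ex_q.
  by rewrite ler_norml; apply/andP; split; lra.
rewrite xgetPN ?subrr ?normr0 // => q simplest_q.
by apply: no_q; exists q.
Qed.

Lemma compress_dist (x : rat -> rat) (e : rat) :
  0 < e -> `|compress x e - x (e / 2)| <= e / 2.
Proof. by move=> e_gt0; apply: approx_dist; rewrite divr_ge0 ?ltW. Qed.

Theorem theorem37 (x : rat -> rat) : regular x -> asymp (compress x) x.
Proof.
move=> x_reg e e_gt0.
have e2_gt0 : 0 < e / 2 by rewrite divr_gt0.
have compress_close := @compress_dist x e e_gt0.
have x_close := x_reg (e / 2) e e2_gt0 e_gt0.
apply: le_trans (ler_distD (x (e / 2)) _ _) _.
lra.
Qed.
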